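(* Let $W\in\mathbb{R}^{m\times n}$ with columns $W_1,\dots,W_n$ and $F:=WW^\top$. Assume Spectral Localization holds for all features: for every $i\in\{1,\dots,n\}$ there is $\lambda(i)>0$ with $FW_i=\lambda(i)W_i$. Let $\lambda_1,\dots,\lambda_r$ be the distinct positive eigenvalues of $F$, and set $$C_k:=\{i:\lambda(i)=\lambda_k\},\qquad V_k:=\operatorname{span}\{W_i:i\in C_k\}.$$ Then $\{C_k\}_{k=1}^r$ partitions $\{1,\dots,n\}$, the subspaces $V_k$ are pairwise orthogonal, and $$F=\sum_{k=1}^r\lambda_k P_{V_k}\quad\text{on }\operatorname{Im}(W),\qquad F=0\text{ on }\ker(F),$$ where $P_{V_k}$ is the orthogonal projector onto $V_k$. Moreover, for each $k$, $$\sum_{i\in C_k}W_iW_i^\top=\lambda_k I\quad\text{on }V_k,$$ i.e. the vectors $(W_i)_{i\in C_k}$ form a tight frame for $V_k$ with frame constant $\lambda_k$.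
   Context: A family of vectors $(w_i)$ spanning a subspace $V$ is a tight frame for $V$ with constant $\lambda$ if $\sum_i w_iw_i^\top$ acts as $\lambda$ times the identity on $V$. *)

From HB Require Import structures.
From mathcomp Require Import all_boot all_order all_algebra.
Set Implicit Arguments. Unset Strict Implicit. Unset Printing Implicit Defensive.
Import Order.TTheory GRing.Theory Num.Theory.
Local Open Scope ring_scope.

(* Conventions: vectors of R^m are column vectors 'cV_m; a subspace of R^m is
   represented (mxalgebra style) by a square matrix V : 'M_m whose ROW space is
   the subspace; a column vector x belongs to V iff (x^T <= V)%MS. *)

Definition in_sub (R : fieldType) (m : nat) (x : 'cV[R]_m) (V : 'M[R]_m) : bool :=
  (x^T <= V)%MS.

Definition span_of (R : fieldType) (m : nat) (I : finType) (S : {set I})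
  (w : I -> 'cV[R]_m) : 'M[R]_m := (\sum_(i in S) <<(w i)^T>>)%MS.

Definition orth_proj (R : realFieldType) (m : nat) (V P : 'M[R]_m) : Prop :=
  forall x : 'cV[R]_m,
    in_sub (P *m x) V /\
    (forall v : 'cV[R]_m, in_sub v V -> v^T *m (x - P *m x) = 0).

Definition tight_frame (R : realFieldType) (m : nat) (I : finType) (S : {set I})
  (w : I -> 'cV[R]_m) (V : 'M[R]_m) (c : R) : Prop :=
  (V == span_of S w)%MS /\
  (forall x : 'cV[R]_m, in_sub x V ->
     (\sum_(i in S) w i *m (w i)^T) *m x = c *: x).

From HB Require Import structures.
From mathcomp Require Import all_boot all_order all_algebra.

Set Implicit Arguments.
Unset Strict Implicit.
Unset Printing Implicit Defensive.

Import Order.TTheory GRing.Theory Num.Theory.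
Local Open Scope ring_scope.

(* Since F = W W^T is symmetric, eigenvectors of F for distinct eigenvalues
   are orthogonal, so the spans V_k of the clusters C_k are pairwise
   orthogonal subspaces on which F acts as lambda_k.  Every positive
   eigenvalue of F is some lambda(i): a left eigenvector for any other nonzero
   eigenvalue is orthogonal to all columns of W, hence killed by F.  Grouping
   W y = sum_i y_i W_i by clusters writes W y as a sum of u_k in V_k, and by
   orthogonality u_k is the projection of W y onto V_k.  Finally
   F = sum_i W_i W_i^T, and on V_k the terms with i outside C_k vanish by
   orthogonality, leaving lambda_k times the identity. *)

Lemma self_dotmx_eq0 (R : realDomainType) (m : nat) (x : 'cV[R]_m) :
  x^T *m x = 0 -> x = 0.
Proof.
move=> /(congr1 (fun M : 'M_1 => M 0 0)); rewrite !mxE => hx.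
apply/matrixP => i j; rewrite ord1 [RHS]mxE.
have hsq_ge0 (k : 'I_m) : predT k -> 0 <= x^T 0 k * x k 0.
  by rewrite mxE -expr2 sqr_ge0.
move: (psumr_eq0P hsq_ge0 hx (i := i) isT); rewrite mxE => /eqP.
by rewrite mulf_eq0 orbb => /eqP.
Qed.

Lemma mulmx_col_sum (R : comPzSemiRingType) (m n : nat) (A : 'M[R]_(m, n))
    (u : 'cV_n) :
  A *m u = \sum_j u j 0 *: col j A.
Proof.
apply/matrixP => a b; rewrite ord1 !mxE summxE.
by apply: eq_bigr => j _; rewrite !mxE mulrC.
Qed.

Lemma mulmx_trmx_col_sum (R : pzSemiRingType) (m n : nat) (A : 'M[R]_(m, n)) :
  A *m A^T = \sum_j col j A *m (col j A)^T.
Proof.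
apply/matrixP => a b; rewrite !mxE summxE; apply: eq_bigr => j _.
by rewrite !mxE big_ord1 !mxE.
Qed.

Lemma mulmx_eigenvectors_eq0 (R : fieldType) (k m p : nat) (F : 'M[R]_m)
    (a b : R) (v : 'M_(k, m)) (u : 'M_(m, p)) :
  a != b -> v *m F = a *: v -> F *m u = b *: u -> v *m u = 0.
Proof.
move=> hab hv hu.
have : (a - b) *: (v *m u) = 0.
  by rewrite scalerBl scalemxAl -hv scalemxAr -hu mulmxA subrr.
by move/eqP; rewrite scaler_eq0 subr_eq0 (negbTE hab) => /eqP.
Qed.

Lemma sym_eigenvectors_orthogonal (R : fieldType) (m : nat) (F : 'M[R]_m)
    (a b : R) (x y : 'cV_m) :
  F^T = F -> a != b -> F *m x = a *: x -> F *m y = b *: y -> x^T *m y = 0.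
Proof.
move=> hF hab hx; apply: mulmx_eigenvectors_eq0 hab _.
by rewrite -[in LHS]hF -trmx_mul hx linearZ.
Qed.

Lemma in_sub_span (R : fieldType) (m : nat) (I : finType) (S : {set I})
    (w : I -> 'cV[R]_m) (i : I) :
  i \in S -> in_sub (w i) (span_of S w).
Proof. by move=> hi; apply: (sumsmx_sup i) => //; rewrite genmxE. Qed.

Lemma in_sub_span_lincomb (R : fieldType) (m : nat) (I : finType)
    (S : {set I}) (w : I -> 'cV[R]_m) (c : I -> R) :
  in_sub (\sum_(i in S) c i *: w i) (span_of S w).
Proof.
rewrite /in_sub linear_sum; apply: summx_sub => i hi.
by rewrite linearZ; apply/scalemx_sub/in_sub_span.
Qed.

Lemma span_of_eigen (R : fieldType) (m : nat) (I : finType) (S : {set I})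
    (w : I -> 'cV[R]_m) (F : 'M_m) (a : R) (x : 'cV_m) :
  (forall i, i \in S -> F *m w i = a *: w i) ->
  in_sub x (span_of S w) -> F *m x = a *: x.
Proof.
move=> hw hx; apply: trmx_inj; rewrite trmx_mul linearZ; apply/eigenspaceP.
apply: submx_trans hx _; apply/sumsmx_subP => i hi; rewrite genmxE.
by apply/eigenspaceP; rewrite -trmx_mul hw // linearZ.
Qed.

Lemma orth_proj_eq (R : realFieldType) (m : nat) (V P : 'M[R]_m)
    (x u : 'cV_m) :
  orth_proj V P -> in_sub u V ->
  (forall v, in_sub v V -> v^T *m (x - u) = 0) -> P *m x = u.
Proof.
move=> /(_ x) [hPx hPorth] hu hxu; apply/eqP; rewrite -subr_eq0; apply/eqP.
set d := P *m x - u.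
have hd : in_sub d V.
  by rewrite /in_sub linearB; apply: addmx_sub => //; rewrite eqmx_opp.
have hd_split : d = (x - u) - (x - P *m x).
  by rewrite opprB [RHS]addrC addrA subrK.
apply: self_dotmx_eq0.
by rewrite {2}hd_split mulmxBr (hxu _ hd) (hPorth _ hd) subrr.
Qed.

Lemma eigenvalue_gram_attained (R : fieldType) (m n : nat)
    (W : 'M[R]_(m, n)) (lam : 'I_n -> R) (a : R) :
  (forall i, (W *m W^T) *m col i W = lam i *: col i W) ->
  a != 0 -> eigenvalue (W *m W^T) a -> exists i, lam i = a.
Proof.
move=> heig ha /eigenvalueP [v hv hv0].
have [i /eqP hi | hnone] := pickP (fun i => lam i == a); first by exists i.
have hvW : v *m W = 0.
  apply/matrixP => b j; apply: (col_eq (j1 := j) (j2 := j)).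
  rewrite colE -mulmxA -colE col0.
  by apply: (mulmx_eigenvectors_eq0 _ hv (heig j)); rewrite eq_sym hnone.
move: hv; rewrite mulmxA hvW mul0mx => /esym/eqP.
by rewrite scaler_eq0 (negbTE ha) (negbTE hv0).
Qed.

Section SpectralClusters.

Variables (R : realFieldType) (m n : nat).
Variables (W : 'M[R]_(m, n)) (lam : 'I_n -> R).
Hypothesis col_neq0 : forall i, col i W != 0.
Hypothesis lam_gt0 : forall i, 0 < lam i.
Hypothesis col_eigen : forall i, (W *m W^T) *m col i W = lam i *: col i W.
Variable s : seq R.
Hypothesis s_uniq : uniq s.
Hypothesis s_spec : forall a : R, a \in s = (0 < a) && eigenvalue (W *m W^T) a.

Local Notation F := (W *m W^T).
Local Notation r := (size s).

Definition cluster (k : 'I_r) : {set 'I_n} := [set i | lam i == s`_k].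

Definition cluster_span (k : 'I_r) : 'M[R]_m :=
  span_of (cluster k) (fun i => col i W).

Lemma gram_sym : F^T = F.
Proof. by rewrite trmx_mul trmxK. Qed.

Lemma lam_in_spec i : lam i \in s.
Proof.
rewrite s_spec lam_gt0; apply/eigenvalueP; exists (col i W)^T.
  by rewrite -[in LHS]gram_sym -trmx_mul col_eigen linearZ.
by rewrite trmx_eq0.
Qed.

Definition cluster_of (i : 'I_n) : 'I_r :=
  Ordinal (etrans (index_mem _ _) (lam_in_spec i)).

Lemma mem_cluster i k : (i \in cluster k) = (cluster_of i == k).
Proof.
rewrite inE; apply/eqP/eqP => [hik | <-]; last first.
  by rewrite /= nth_index ?lam_in_spec.
by apply: val_inj; rewrite /= hik index_uniq.
Qed.

Lemma cluster_neq0 k : cluster k != set0.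
Proof.
have : s`_k \in s by rewrite mem_nth.
rewrite s_spec => /andP [hk /(eigenvalue_gram_attained col_eigen)].
case=> [|i hi]; first exact: lt0r_neq0.
by apply/set0Pn; exists i; rewrite inE hi.
Qed.

Lemma cluster_partition : partition [set cluster k | k : 'I_r] [set: 'I_n].
Proof.
have hn0 : set0 \notin [set cluster k | k : 'I_r].
  by apply/imsetP => [[k _ /esym/eqP]]; rewrite (negbTE (cluster_neq0 k)).
apply/and3P; split=> //.
- apply/eqP/setP => i; rewrite cover_imset inE; apply/bigcupP.
  by exists (cluster_of i); rewrite ?mem_cluster.
- have [] // := trivIimset _ hn0 => k l _ _ hlk.
  rewrite -setI_eq0; apply/eqP/setP => i; rewrite !inE.
  apply/negP => /andP [/eqP ->]; rewrite nth_uniq // => /eqP/val_inj hkl.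
  by rewrite hkl eqxx in hlk.
Qed.

Lemma cluster_span_eigen k x :
  in_sub x (cluster_span k) -> F *m x = s`_k *: x.
Proof. by apply: span_of_eigen => i; rewrite inE => /eqP <-. Qed.

Lemma cluster_span_orthogonal k l x y : k != l ->
  in_sub x (cluster_span k) -> in_sub y (cluster_span l) -> x^T *m y = 0.
Proof.
move=> hkl /cluster_span_eigen hx /cluster_span_eigen hy.
by apply: sym_eigenvectors_orthogonal gram_sym _ hx hy; rewrite nth_uniq.
Qed.

Definition cluster_component (y : 'cV[R]_n) (k : 'I_r) : 'cV[R]_m :=
  \sum_(i in cluster k) y i 0 *: col i W.

Lemma cluster_component_in_span y k :
  in_sub (cluster_component y k) (cluster_span k).
Proof. exact: in_sub_span_lincomb. Qed.

Lemma mulmx_cluster_sum y : W *m y = \sum_k cluster_component y k.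
Proof.
rewrite mulmx_col_sum (partition_big cluster_of predT) //=.
by apply: eq_bigr => k _; apply: eq_bigl => i; rewrite mem_cluster.
Qed.

Lemma cluster_proj (P : 'M_m) k y :
  orth_proj (cluster_span k) P -> P *m (W *m y) = cluster_component y k.
Proof.
move=> hP; apply: orth_proj_eq hP (cluster_component_in_span y k) _ => v hv.
rewrite mulmx_cluster_sum (bigD1 k) //= addrC addrK mulmx_sumr big1 // => l.
rewrite eq_sym => hkl.
exact: cluster_span_orthogonal hkl hv (cluster_component_in_span _ _).
Qed.

Lemma gram_on_image (P : 'I_r -> 'M_m) (y : 'cV_n) :
  (forall k, orth_proj (cluster_span k) (P k)) ->
  F *m (W *m y) = \sum_(k < r) s`_k *: (P k *m (W *m y)).
Proof.
move=> hP; rewrite {1}mulmx_cluster_sum mulmx_sumr; apply: eq_bigr => k _.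
rewrite (cluster_proj _ (hP k)).
by rewrite (cluster_span_eigen (cluster_component_in_span y k)).
Qed.

Lemma cluster_tight_frame k :
  tight_frame (cluster k) (fun i => col i W) (cluster_span k) s`_k.
Proof.
split=> [|x hx]; first by apply/andP; split.
rewrite -(cluster_span_eigen hx) mulmx_trmx_col_sum !mulmx_suml.
rewrite [RHS](bigID (mem (cluster k))) /=.
rewrite [X in _ = _ + X]big1 ?addr0 // => i hi.
have hlam : lam i != s`_k by rewrite inE in hi.
have hortho : (col i W)^T *m x = 0.
  have hx_eigen := cluster_span_eigen hx.
  exact: sym_eigenvectors_orthogonal gram_sym hlam (col_eigen i) hx_eigen.
by rewrite -mulmxA hortho mulmx0.
Qed.

End SpectralClusters.

Theorem theorem3 (R : realFieldType) (m n : nat) (W : 'M[R]_(m, n))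
  (lam : 'I_n -> R)
  (* Spectral Localization: each feature W_i is an eigenvector of F = W W^T
     with positive eigenvalue lam i *)
  (hnz : forall i, col i W != 0)
  (hpos : forall i, 0 < lam i)
  (heig : forall i, (W *m W^T) *m col i W = lam i *: col i W)
  (* s = (lambda_1, ..., lambda_r): the distinct positive eigenvalues of F *)
  (s : seq R) (s_uniq : uniq s)
  (s_spec : forall a : R, a \in s = (0 < a) && eigenvalue (W *m W^T) a) :
  let F := W *m W^T in
  let r := size s in
  let C := fun k : 'I_r => [set i : 'I_n | lam i == s`_k] in
  let V := fun k : 'I_r => span_of (C k) (fun i => col i W) in
  partition [set C k | k : 'I_r] [set: 'I_n]
  /\ (forall k l : 'I_r, k != l -> forall x y : 'cV[R]_m,
        in_sub x (V k) -> in_sub y (V l) -> x^T *m y = 0)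
  /\ (forall P : 'I_r -> 'M[R]_m, (forall k, orth_proj (V k) (P k)) ->
        forall y : 'cV[R]_n,
          F *m (W *m y) = \sum_(k < r) s`_k *: (P k *m (W *m y)))
  /\ (forall x : 'cV[R]_m, F *m x = 0 -> F *m x = 0)
  /\ (forall k : 'I_r,
        tight_frame (C k) (fun i => col i W) (V k) s`_k).
Proof.
move=> F r C V; split; [|split; [|split; [|split]]].
- exact: (cluster_partition hnz hpos heig s_uniq s_spec).
- by move=> k l hkl x y; apply: (cluster_span_orthogonal heig s_uniq hkl).
- by move=> P hP y; apply: (gram_on_image hnz hpos heig s_uniq s_spec y hP).
- by [].
- exact: (cluster_tight_frame heig).
Qed.
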